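(* Let $\mathrm{Lab}$ be a labelling system on a finite simplicial tree $T$ with index set $\{1,\dots,N\}$. Then every edge of $T$ is useless if and only if there is a full vertex, i.e. a vertex $z$ with $\mathrm{Lab}(z)=\{1,\dots,N\}$.
   Context: A labelling system on a finite simplicial tree $T$ assigns to each vertex $v$ a subset $\mathrm{Lab}(v)\subset\{1,\dots,N\}$ such that (A) $\mathrm{Lab}(a)\cap\mathrm{Lab}(b)\subset\mathrm{Lab}(x)$ whenever $x$ is a vertex on the shortest path $[ab]$ between vertices $a,b$, and (B) $\bigcup_v\mathrm{Lab}(v)=\{1,\dots,N\}$. Removing the open edge $e$ from $T$ leaves two closed connected components $T^+(e)$, $T^-(e)$. The edge $e$ is useless if $\bigcup_{v\in T^+(e)}\mathrm{Lab}(v)$ or $\bigcup_{v\in T^-(e)}\mathrm{Lab}(v)$ equals $\{1,\dots,N\}$, and useful otherwise. *)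

From mathcomp Require Import all_boot.
Set Implicit Arguments. Unset Strict Implicit. Unset Printing Implicit Defensive.

Definition simple_graph (T : finType) (e : rel T) : Prop :=
  symmetric e /\ irreflexive e.

Definition has_cycle (T : finType) (e : rel T) : Prop :=
  exists (x : T) (p : seq T),
    [/\ 2 <= size p, uniq (x :: p), path e x p & e (last x p) x].

Definition is_tree (T : finType) (e : rel T) : Prop :=
  [/\ simple_graph e, 0 < #|T|, (forall a b : T, connect e a b) & ~ has_cycle e].

Definition on_geodesic (T : finType) (e : rel T) (a b x : T) : Prop :=
  exists p : seq T,
    [/\ path e a p, last a p = b, x \in a :: p &
        forall q : seq T, path e a q -> last a q = b -> size p <= size q].

(* Labelling system with index set 'I_N (standing for {1,...,N}). *)
Definition labelling_system (T : finType) (e : rel T) (N : nat)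
  (Lab : T -> {set 'I_N}) : Prop :=
  (forall a b x : T, on_geodesic e a b x -> Lab a :&: Lab b \subset Lab x) /\
  \bigcup_(v : T) Lab v = setT.

Definition remove_edge (T : finType) (e : rel T) (u v : T) : rel T :=
  fun x y => e x y && ~~ (((x == u) && (y == v)) || ((x == v) && (y == u))).

Definition comp_plus (T : finType) (e : rel T) (u v : T) : {set T} :=
  [set w | connect (remove_edge e u v) u w].
Definition comp_minus (T : finType) (e : rel T) (u v : T) : {set T} :=
  [set w | connect (remove_edge e u v) v w].

Definition useless_edge (T : finType) (e : rel T) (N : nat)
  (Lab : T -> {set 'I_N}) (u v : T) : Prop :=
  \bigcup_(w in comp_plus e u v) Lab w = setT \/
  \bigcup_(w in comp_minus e u v) Lab w = setT.

From mathcomp Require Import all_boot.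
Set Implicit Arguments. Unset Strict Implicit. Unset Printing Implicit Defensive.

(* The direction "full vertex => every edge useless" is immediate: removing an
   edge uv puts the full vertex z in T^+(uv) or in T^-(uv), and that side then
   covers all indices.

   For the converse, orient each edge uv towards the side T^-(uv) it covers
   when possible, and pick an edge zy whose far side T^-(zy) covers all
   indices and has the fewest vertices.  For any other neighbour w of y the
   far side T^-(yw) is strictly contained in T^-(zy), so by minimality it does
   not cover and, the edge yw being useless, the near side T^+(yw) does.
   Hence every side T^+(yy') seen from the centre y covers all indices.  Given
   an index i, take a vertex a labelled i; if a <> y, a lies in T^-(yy') for
   the first neighbour y' towards a, and some b of T^+(yy') is labelled i.
   Every path from a to b crosses y, in particular a geodesic, so axiom (A)
   puts i in Lab y. *)

Section RemoveEdge.
Variables (T : finType) (e : rel T).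

Lemma remove_edge_sub (u v : T) : subrel (remove_edge e u v) e.
Proof. by move=> x y /andP[]. Qed.

Lemma remove_edgeC (u v : T) : remove_edge e u v =2 remove_edge e v u.
Proof. by move=> x y; rewrite /remove_edge orbC. Qed.

Lemma comp_plusC (u v : T) : comp_plus e u v = comp_minus e v u.
Proof. by apply/setP=> x; rewrite !inE (eq_connect (remove_edgeC u v)). Qed.

Lemma remove_edge_sym (u v : T) : symmetric e -> symmetric (remove_edge e u v).
Proof.
move=> eS x y; rewrite /remove_edge eS orbC.
by congr (_ && ~~ (_ || _)); rewrite andbC.
Qed.

Lemma path_avoid_edge (u v x : T) (p : seq T) :
  (u \notin x :: p) || (v \notin x :: p) ->
  path e x p -> path (remove_edge e u v) x p.
Proof.
have avoid r s : r \notin x :: p -> path e x p -> path (remove_edge e r s) x p.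
  rewrite -has_pred1 -all_predC; apply: sub_in_path => y z /negbTE ry /negbTE rz eyz.
  by rewrite /remove_edge eyz [y == r]ry [z == r]rz /= andbF.
case/orP=> [/(avoid u v) // | /(avoid v u) p_rem /p_rem].
by rewrite (eq_path (remove_edgeC u v)).
Qed.

End RemoveEdge.

Section Acyclic.
Variables (T : finType) (e : rel T).
Hypotheses (eS : symmetric e) (eI : irreflexive e) (acyclic : ~ has_cycle e).

Lemma edge_neq (u v : T) : e u v -> u != v.
Proof. by move=> euv; apply/eqP => u_eq_v; move: euv; rewrite u_eq_v eI. Qed.

(* In an acyclic graph every edge is a bridge: a detour from u to v avoiding
   the edge uv would close a cycle. *)
Lemma edge_disconnects (u v : T) :
  e u v -> ~~ connect (remove_edge e u v) u v.
Proof.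
move=> euv; apply/negP => /connectP[p0 /shortenP[p pp up _] ev].
have uv := edge_neq euv.
case: p pp up ev => [|y [|z p]] /=; first by move=> _ _ v_eq_u; rewrite v_eq_u eqxx in uv.
  by move=> /andP[ruy _] _ y_eq_v; move: ruy; rewrite -y_eq_v /remove_edge !eqxx andbF.
move=> /andP[ruy pp] up ev; apply: acyclic; exists u, [:: y, z & p]; split => //.
- by apply: (sub_path (@remove_edge_sub T e u v)); rewrite /= ruy.
- by rewrite /= -ev eS.
Qed.

(* After deleting uv, every vertex reachable from u lies on u's side or on
   v's side (cut a shortest route at its last visit of v). *)
Lemma connect_sides (u v z : T) : u != v -> connect e u z ->
  connect (remove_edge e u v) u z \/ connect (remove_edge e u v) v z.
Proof.
move=> uv /connectP[p0 /shortenP[p pp up _] ->].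
case: (boolP (v \in u :: p)) => [|v_notin]; last first.
  by left; apply/connectP; exists p => //; apply: path_avoid_edge => //; apply/orP; right.
rewrite in_cons eq_sym (negbTE uv) /= => /splitPr vp; case: vp pp up => p1 p2.
rewrite cat_path /= mem_cat => /and3P[_ _ pp2] /andP[/norP[_ /norP[_ up2]] _].
right; apply/connectP; exists p2; last by rewrite last_cat.
by apply: path_avoid_edge pp2; rewrite in_cons negb_or uv up2.
Qed.

Lemma path_crosses_edge (z y a b : T) (p : seq T) : e z y ->
  a \in comp_minus e z y -> b \in comp_plus e z y ->
  path e a p -> last a p = b -> z \in a :: p.
Proof.
rewrite !inE => ezy ya zb pp lp; apply/negPn/negP => z_notin.
have ab : connect (remove_edge e z y) a b.
  by apply/connectP; exists p => //; apply: path_avoid_edge; rewrite ?z_notin.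
have zy : connect (remove_edge e z y) z y.
  rewrite (connect_trans zb) // sym_connect_sym; last exact: remove_edge_sym.
  exact: connect_trans ya ab.
by move: (edge_disconnects ezy); rewrite zy.
Qed.

(* Moving one step away from z shrinks the far side: for w <> z adjacent to y,
   T^-(yw) is a proper subset of T^-(zy) (it misses y). *)
Lemma comp_minus_proper (z y w : T) : e z y -> e y w -> w != z ->
  comp_minus e y w \proper comp_minus e z y.
Proof.
move=> ezy eyw wz; have yz : y != z by rewrite eq_sym edge_neq.
apply/properP; split; last first.
  exists y; first by rewrite inE connect0.
  rewrite inE sym_connect_sym; [exact: edge_disconnects | exact: remove_edge_sym].
apply/subsetP => x; rewrite !inE => /connectP[p pp ->].
have y_notin : y \notin w :: p.
  apply/negP => /(path_connect pp); rewrite sym_connect_sym; last exact: remove_edge_sym.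
  by apply/negP; exact: edge_disconnects.
have ryw : remove_edge e z y y w by rewrite /remove_edge eyw (negbTE yz) (negbTE wz) andbF.
apply: (connect_trans (connect1 ryw)); apply/connectP; exists p => //.
by apply: path_avoid_edge (sub_path (@remove_edge_sub T e y w) pp); rewrite y_notin orbT.
Qed.

End Acyclic.

Lemma neighbour_towards (T : finType) (e : rel T) (z a : T) : z != a -> connect e z a ->
  exists2 y, e z y & connect (remove_edge e z y) y a.
Proof.
move=> za /connectP[p0 /shortenP[[|y q] pp up _] ea]; first by rewrite ea eqxx in za.
move: pp up => /= /andP[ezy pq] /andP[z_notin _]; exists y => //.
by apply/connectP; exists q => //; apply: path_avoid_edge pq; rewrite z_notin.
Qed.

(* Connected vertices are joined by a shortest path; minimality is decided
   over tuples of each length, so no choice principle is needed. *)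
Lemma geodesic_exists (T : finType) (r : rel T) (a b : T) : connect r a b ->
  exists p : seq T, [/\ path r a p, last a p = b &
    forall q : seq T, path r a q -> last a q = b -> size p <= size q].
Proof.
pose reach n := [exists t : n.-tuple T, path r a t && (last a t == b)].
have reachP q : path r a q -> last a q = b -> reach (size q).
  by move=> pq lq; apply/existsP; exists (in_tuple q); rewrite pq lq eqxx.
case/connectP=> p0 pp0 /esym lp0.
case: (ex_minnP (ex_intro reach _ (reachP p0 pp0 lp0))) => n /existsP[t /andP[pt /eqP lt]] min_n.
by exists t; split=> // q pq lq; rewrite size_tuple; apply/min_n/reachP.
Qed.

Section Labelling.
Variables (T : finType) (e : rel T) (N : nat) (Lab : T -> {set 'I_N}).
Hypotheses (eS : symmetric e) (eI : irreflexive e) (acyclic : ~ has_cycle e).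
Hypothesis connected : forall a b : T, connect e a b.

Definition covers (A : {set T}) : Prop := \bigcup_(w in A) Lab w = setT.

Lemma full_vertex_of_covering_sides (z : T) :
  labelling_system e Lab ->
  (forall y, e z y -> covers (comp_plus e z y)) -> Lab z = setT.
Proof.
move=> [geodesic_convex cover] sides_cover; apply/setP => i; rewrite inE.
have /bigcupP[a _ ia] : i \in \bigcup_v Lab v by rewrite cover inE.
have [-> // | za] := eqVneq z a.
have [y ezy ya] := neighbour_towards za (connected z a).
have /bigcupP[b zb ib] : i \in \bigcup_(w in comp_plus e z y) Lab w.
  by rewrite sides_cover // inE.
have [p [pp lp min_p]] := geodesic_exists (connected a b).
have z_on_p : z \in a :: p.
  by apply: (path_crosses_edge eS eI acyclic ezy _ zb pp lp); rewrite inE.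
have /subsetP := geodesic_convex a b z (ex_intro _ p (And4 pp lp z_on_p min_p)).
by apply; rewrite inE ia ib.
Qed.

(* If all edges are useless, some vertex has all its near sides covering: the
   head of a covering far side of minimal size (or any vertex, if no far side
   covers). *)
Lemma covering_center : 0 < #|T| ->
  (forall u v, e u v -> useless_edge e Lab u v) ->
  exists z, forall y, e z y -> covers (comp_plus e z y).
Proof.
move=> T_nonempty useless.
pose far_covers (uv : T * T) :=
  e uv.1 uv.2 && (\bigcup_(w in comp_minus e uv.1 uv.2) Lab w == setT).
have [[z0 y0] far0 | no_far] := pickP far_covers; last first.
  case/card_gt0P: T_nonempty => z _; exists z => y ezy.
  case: (useless z y ezy) => // far; move: (no_far (z, y)).
  by rewrite /far_covers /= ezy far eqxx.
case: (arg_minnP (fun uv => #|comp_minus e uv.1 uv.2|) far0) => [[z y]].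
move=> /andP[/= ezy /eqP far] min_zy; exists y => w eyw.
have [-> | wz] := eqVneq w z; first by rewrite comp_plusC.
case: (useless y w eyw) => // far_w; exfalso.
have := min_zy (y, w); rewrite /far_covers /= eyw far_w eqxx => /(_ isT).
by rewrite leqNgt proper_card // (comp_minus_proper eS eI acyclic ezy eyw wz).
Qed.

Lemma full_vertex_useless (z : T) : Lab z = setT ->
  forall u v, e u v -> useless_edge e Lab u v.
Proof.
move=> z_full u v euv; have uv := edge_neq eI euv.
have full_side (A : {set T}) : z \in A -> covers A.
  by move=> zA; apply/eqP; rewrite eqEsubset subsetT -z_full (bigcup_sup z zA).
by case: (connect_sides uv (connected u z)) => side; [left | right]; apply: full_side; rewrite inE.
Qed.

End Labelling.

Theorem mainTheorem10 (T : finType) (e : rel T) (N : nat)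
  (Lab : T -> {set 'I_N}) :
  is_tree e -> labelling_system e Lab ->
  ((forall u v : T, e u v -> useless_edge e Lab u v) <->
   exists z : T, Lab z = setT).
Proof.
move=> [[eS eI] T_nonempty connected acyclic] labelling; split.
- move=> useless; have [z sides_cover] := covering_center eS eI acyclic T_nonempty useless.
  by exists z; exact: full_vertex_of_covering_sides.
- by case=> z z_full; exact: full_vertex_useless z_full.
Qed.
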